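(* Let $a,b$ be distinct real numbers, let $x_0\in\mathbb{R}$, and let $(\lambda_n)_{n\in\mathbb{N}}$ be a sequence with $\lambda_n\in\,]1,2[$ for all $n$, $\lambda_n\to 2$, and $\sum_{n}(2-\lambda_n)<+\infty$. Define the sequence $(x_n)_{n\in\mathbb{N}}$ of alternating relaxed projections onto $\{a\}$ and $\{b\}$ by \[ x_{2n+1}:=(1-\lambda_{2n})x_{2n}+\lambda_{2n}a,\qquad x_{2n+2}:=(1-\lambda_{2n+1})x_{2n+1}+\lambda_{2n+1}b . \] Then $x_{2n}\to \operatorname{sign}(b-a)\,\infty$ and $x_{2n+1}\to\operatorname{sign}(a-b)\,\infty$; in particular $|x_n|\to+\infty$. *)

From Stdlib Require Import Reals Lra.
Open Scope R_scope.

Fixpoint arp (a b x0 : R) (lam : nat -> R) (n : nat) : R :=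
  match n with
  | O => x0
  | S k => if Nat.even k
           then (1 - lam k) * arp a b x0 lam k + lam k * a
           else (1 - lam k) * arp a b x0 lam k + lam k * b
  end.

Definition cv_minus_infty (u : nat -> R) : Prop :=
  forall M : R, exists N : nat, forall n : nat, (n >= N)%nat -> u n < M.

(* Write x for the sequence and q_n := (λ_{2n} - 1)(λ_{2n+1} - 1) ∈ ]0,1[.  Two
   relaxed steps give the affine recursion
     x_{2n+2} - a = q_n (x_{2n} - a) + λ_{2n+1} (b - a),
   a contraction toward a perturbed by a drift of at least b - a > 0 (say a < b).
   Since 1 - q_n ≤ (2 - λ_{2n}) + (2 - λ_{2n+1}) is summable, after discarding
   finitely many steps the products q_m ⋯ q_{n-1} stay above 1/2, so
   x_{2n} - a grows at least linearly.  The odd terms are the reflections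
   x_{2n+2} - b = (1 - λ_{2n+1}) (x_{2n+1} - b) with 1 - λ_{2n+1} ∈ ]-1,0[, hence
   x_{2n+1} ≤ 2b - x_{2n+2} → -∞.  The case b < a follows by negating a, b, x_0. *)

From Stdlib Require Import Reals Lra Lia.
Open Scope R_scope.

Lemma cv_infty_shift (u : nat -> R) (N : nat) :
  cv_infty (fun k => u (N + k)%nat) -> cv_infty u.
Proof.
  intros Hu M. destruct (Hu M) as [K HK]. exists (N + K)%nat. intros n Hn.
  replace n with (N + (n - N))%nat by lia. apply HK. lia.
Qed.

Lemma cv_infty_of_sub_const (u : nat -> R) (c : R) :
  cv_infty (fun n => u n - c) -> cv_infty u.
Proof.
  intros Hu M. destruct (Hu (M - c)) as [N HN]. exists N. intros n Hn.
  specialize (HN n Hn). lra.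
Qed.

Lemma cv_minus_infty_opp (u v : nat -> R) :
  (forall n, v n = - u n) -> cv_infty v -> cv_minus_infty u.
Proof.
  intros Hv Hu M. destruct (Hu (- M)) as [N HN]. exists N. intros n Hn.
  specialize (HN n Hn). rewrite Hv in HN. lra.
Qed.

Lemma cv_infty_opp (u v : nat -> R) :
  (forall n, v n = - u n) -> cv_minus_infty v -> cv_infty u.
Proof.
  intros Hv Hu M. destruct (Hu (- M)) as [N HN]. exists N. intros n Hn.
  specialize (HN n Hn). rewrite Hv in HN. lra.
Qed.

Lemma cv_infty_Rabs (u : nat -> R) : cv_infty u -> cv_infty (fun n => Rabs (u n)).
Proof.
  intros Hu M. destruct (Hu M) as [N HN]. exists N. intros n Hn.
  specialize (HN n Hn). pose proof (Rle_abs (u n)). lra.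
Qed.

Lemma cv_minus_infty_Rabs (u : nat -> R) :
  cv_minus_infty u -> cv_infty (fun n => Rabs (u n)).
Proof.
  intros Hu M. destruct (Hu (- M)) as [N HN]. exists N. intros n Hn.
  specialize (HN n Hn). pose proof (Rle_abs (- u n)). rewrite Rabs_Ropp in *. lra.
Qed.

Lemma cv_infty_even_odd (u : nat -> R) :
  cv_infty (fun n => u (2 * n)%nat) -> cv_infty (fun n => u (2 * n + 1)%nat) ->
  cv_infty u.
Proof.
  intros Heven Hodd M.
  destruct (Heven M) as [N1 H1], (Hodd M) as [N2 H2].
  exists (2 * (N1 + N2) + 2)%nat. intros n Hn.
  destruct (Nat.Even_or_Odd n) as [[m ->]|[m ->]]; [apply H1 | apply H2]; lia.
Qed.

Lemma cv_infty_ge_affine (u : nat -> R) (c u0 d : R) :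
  0 < c -> 0 < d ->
  (forall n, 0 <= u0 + INR n * d -> c * (u0 + INR n * d) <= u n) ->
  cv_infty u.
Proof.
  intros Hc Hd Hu M.
  destruct (INR_unbounded ((Rabs M / c + Rabs u0) / d)) as [N HN].
  exists N. intros n Hn. apply le_INR in Hn.
  assert (Hlin : Rabs M / c + Rabs u0 < INR n * d).
  { replace (Rabs M / c + Rabs u0) with ((Rabs M / c + Rabs u0) / d * d)
      by (field; lra).
    apply Rmult_lt_compat_r; lra. }
  pose proof (Rle_abs M). pose proof (Rle_abs (- u0)). rewrite Rabs_Ropp in *.
  assert (Hpos : 0 <= Rabs M / c) by (apply Rmult_le_pos; [apply Rabs_pos | apply Rlt_le, Rinv_0_lt_compat; lra]).
  assert (HM : Rabs M = c * (Rabs M / c)) by (field; lra).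
  specialize (Hu n ltac:(lra)). nra.
Qed.

Lemma sum_tail_lt (f : nat -> R) (l eps : R) :
  Un_cv (fun N => sum_f_R0 f N) l -> 0 < eps ->
  exists M, forall n, sum_f_R0 (fun k => f (S M + k)%nat) n < eps.
Proof.
  intros Hf Heps. destruct (Hf (eps / 2) ltac:(lra)) as [M HM].
  exists M. intro n.
  assert (Hsplit := tech2 f M (S M + n) ltac:(lia)).
  replace (S M + n - S M)%nat with n in Hsplit by lia.
  assert (H1 := HM (S M + n)%nat ltac:(lia)). assert (H2 := HM M ltac:(lia)).
  unfold R_dist in H1, H2. apply Rabs_def2 in H1. apply Rabs_def2 in H2. lra.
Qed.

Lemma sum_pairs (f : nat -> R) (n : nat) :
  sum_f_R0 (fun k => f (2 * k)%nat + f (2 * k + 1)%nat) n = sum_f_R0 f (2 * n + 1).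
Proof.
  induction n as [|n IH]; [reflexivity|].
  replace (2 * S n + 1)%nat with (S (S (2 * n + 1))) by lia.
  cbn [sum_f_R0]. rewrite IH.
  replace (2 * S n)%nat with (S (2 * n + 1)) by lia.
  replace (S (2 * n + 1) + 1)%nat with (S (S (2 * n + 1))) by lia.
  ring.
Qed.

Lemma Un_cv_sum_pairs (f : nat -> R) (l : R) :
  Un_cv (fun N => sum_f_R0 f N) l ->
  Un_cv (fun N => sum_f_R0 (fun k => f (2 * k)%nat + f (2 * k + 1)%nat) N) l.
Proof.
  intros Hf eps Heps. destruct (Hf eps Heps) as [N HN]. exists N. intros n Hn.
  rewrite sum_pairs. apply HN. lia.
Qed.

Fixpoint prefix_prod (p : nat -> R) (n : nat) : R :=
  match n with O => 1 | S k => p k * prefix_prod p k end.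

Section UnitInterval.

Variable p : nat -> R.
Hypothesis p_unit : forall n, 0 <= p n <= 1.

Lemma prefix_prod_bounds (n : nat) : 0 <= prefix_prod p n <= 1.
Proof. induction n as [|n IH]; cbn; [lra|]. specialize (p_unit n). nra. Qed.

Lemma sum_one_minus_ge0 (n : nat) : 0 <= sum_f_R0 (fun k => 1 - p k) n.
Proof. apply cond_pos_sum. intro k. specialize (p_unit k). lra. Qed.

Lemma prefix_prod_ge (n : nat) :
  1 - sum_f_R0 (fun k => 1 - p k) n <= prefix_prod p (S n).
Proof.
  induction n as [|n IH]; cbn in *; [lra|].
  pose proof (p_unit (S n)). pose proof (sum_one_minus_ge0 n). nra.
Qed.

Lemma affine_recurrence_ge (u : nat -> R) (d : R) :
  0 <= d -> (forall n, p n * u n + d <= u (S n)) ->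
  forall n, prefix_prod p n * (u O + INR n * d) <= u n.
Proof.
  intros Hd Hu n. induction n as [|n IH]; cbn [prefix_prod]; [cbn; lra|].
  rewrite S_INR. specialize (Hu n). pose proof (p_unit n).
  pose proof (prefix_prod_bounds (S n)). cbn [prefix_prod] in *.
  assert (p n * (prefix_prod p n * (u O + INR n * d)) <= p n * u n)
    by (apply Rmult_le_compat_l; lra).
  nra.
Qed.

Lemma cv_infty_perturbed_contraction (u : nat -> R) (d s : R) :
  0 < d -> s < 1 ->
  (forall n, sum_f_R0 (fun k => 1 - p k) n <= s) ->
  (forall n, p n * u n + d <= u (S n)) ->
  cv_infty u.
Proof.
  intros Hd Hs Hsum Hu.
  assert (Hprod : forall n, 1 - s <= prefix_prod p n).
  { intros [|n]; [cbn; pose proof (sum_one_minus_ge0 O); specialize (Hsum O); lra|].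
    pose proof (prefix_prod_ge n). specialize (Hsum n). lra. }
  apply (cv_infty_ge_affine u (1 - s) (u O) d); [lra | exact Hd |].
  intros n Hn. pose proof (affine_recurrence_ge u d ltac:(lra) Hu n).
  specialize (Hprod n).
  assert ((1 - s) * (u O + INR n * d) <= prefix_prod p n * (u O + INR n * d))
    by (apply Rmult_le_compat_r; lra).
  lra.
Qed.

End UnitInterval.

Lemma arp_even_S a b x0 lam n :
  arp a b x0 lam (S (2 * n)) =
  (1 - lam (2 * n)%nat) * arp a b x0 lam (2 * n) + lam (2 * n)%nat * a.
Proof. cbn [arp]. now rewrite Nat.even_mul. Qed.

Lemma arp_odd_S a b x0 lam n :
  arp a b x0 lam (S (S (2 * n))) =
  (1 - lam (S (2 * n))) * arp a b x0 lam (S (2 * n)) + lam (S (2 * n)) * b.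
Proof. cbn [arp]. now rewrite Nat.even_succ, Nat.odd_mul. Qed.

Lemma arp_two_steps a b x0 lam n :
  arp a b x0 lam (2 * S n) - a =
  (lam (2 * n)%nat - 1) * (lam (S (2 * n)) - 1) * (arp a b x0 lam (2 * n) - a)
  + lam (S (2 * n)) * (b - a).
Proof.
  replace (2 * S n)%nat with (S (S (2 * n))) by lia.
  rewrite arp_odd_S, arp_even_S. ring.
Qed.

Lemma arp_opp a b x0 lam n : arp (- a) (- b) (- x0) lam n = - arp a b x0 lam n.
Proof. induction n as [|n IH]; [reflexivity|]. cbn [arp]. rewrite IH. destruct (Nat.even n); ring. Qed.

Section Divergence.

Variables (a b x0 : R) (lam : nat -> R).
Hypothesis lam_range : forall n, 1 < lam n < 2.
Let x := arp a b x0 lam.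

Lemma arp_even_cv_infty :
  a < b ->
  (exists l, Un_cv (fun N => sum_f_R0 (fun n => 2 - lam n) N) l) ->
  cv_infty (fun n => x (2 * n)%nat).
Proof.
  intros Hab [l Hl].
  set (e := fun n => 2 - lam n).
  destruct (sum_tail_lt _ l (1 / 2) (Un_cv_sum_pairs e l Hl) ltac:(lra)) as [M HM].
  set (q := fun k => (lam (2 * (S M + k))%nat - 1) * (lam (S (2 * (S M + k))) - 1)).
  assert (Hq : forall k, 0 <= q k <= 1).
  { intro k. unfold q. pose proof (lam_range (2 * (S M + k))).
    pose proof (lam_range (S (2 * (S M + k)))). split; nra. }
  assert (Hloss : forall k,
            1 - q k <= e (2 * (S M + k))%nat + e (2 * (S M + k) + 1)%nat).
  { intro k. unfold q, e. replace (2 * (S M + k) + 1)%nat with (S (2 * (S M + k))) by lia.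
    pose proof (lam_range (2 * (S M + k))). pose proof (lam_range (S (2 * (S M + k)))).
    nra. }
  apply (cv_infty_shift _ (S M)).
  apply (cv_infty_of_sub_const _ a).
  apply (cv_infty_perturbed_contraction q Hq _ (b - a) (1 / 2)); [lra | lra | |].
  - intro n. apply Rle_trans with (2 := Rlt_le _ _ (HM n)).
    apply sum_Rle. intros k _. apply Hloss.
  - intro n. replace (S M + S n)%nat with (S (S M + n)) by lia.
    unfold x. rewrite arp_two_steps. fold x. unfold q.
    pose proof (lam_range (S (2 * (S M + n)))).
    assert (b - a <= lam (S (2 * (S M + n))) * (b - a)) by nra.
    lra.
Qed.

Lemma arp_odd_le_reflection (n : nat) :
  b <= x (2 * S n)%nat -> x (2 * n + 1)%nat <= 2 * b - x (2 * S n)%nat.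
Proof.
  unfold x. replace (2 * S n)%nat with (S (S (2 * n))) by lia.
  replace (2 * n + 1)%nat with (S (2 * n)) by lia.
  rewrite arp_odd_S. pose proof (lam_range (S (2 * n))). nra.
Qed.

Lemma arp_odd_cv_minus_infty :
  cv_infty (fun n => x (2 * n)%nat) -> cv_minus_infty (fun n => x (2 * n + 1)%nat).
Proof.
  intros Heven M. destruct (Heven (Rmax (2 * b - M) b)) as [N HN].
  exists N. intros n Hn. specialize (HN (S n) ltac:(lia)).
  pose proof (Rmax_l (2 * b - M) b). pose proof (Rmax_r (2 * b - M) b).
  pose proof (arp_odd_le_reflection n ltac:(lra)). lra.
Qed.

Lemma arp_cv_of_lt :
  a < b ->
  (exists l, Un_cv (fun N => sum_f_R0 (fun n => 2 - lam n) N) l) ->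
  cv_infty (fun n => x (2 * n)%nat) /\ cv_minus_infty (fun n => x (2 * n + 1)%nat).
Proof.
  intros Hab Hsum. pose proof (arp_even_cv_infty Hab Hsum) as Heven.
  exact (conj Heven (arp_odd_cv_minus_infty Heven)).
Qed.

End Divergence.

Theorem mainTheorem4 (a b x0 : R) (lam : nat -> R) :
  a <> b ->
  (forall n, 1 < lam n < 2) ->
  Un_cv lam 2 ->
  (exists l : R, Un_cv (fun N => sum_f_R0 (fun n => 2 - lam n) N) l) ->
  ((a < b ->
      cv_infty (fun n => arp a b x0 lam (2 * n)) /\
      cv_minus_infty (fun n => arp a b x0 lam (2 * n + 1))) /\
   (b < a ->
      cv_minus_infty (fun n => arp a b x0 lam (2 * n)) /\
      cv_infty (fun n => arp a b x0 lam (2 * n + 1)))) /\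
  cv_infty (fun n => Rabs (arp a b x0 lam n)).
Proof.
  intros Hab Hlam _ Hsum.
  pose proof (fun a b x0 Hab => arp_cv_of_lt a b x0 lam Hlam Hab Hsum) as Hlt.
  assert (Hgt : b < a ->
            cv_minus_infty (fun n => arp a b x0 lam (2 * n)) /\
            cv_infty (fun n => arp a b x0 lam (2 * n + 1))).
  { intro H. destruct (Hlt (- a) (- b) (- x0) ltac:(lra)) as [Heven Hodd].
    split; [apply (cv_minus_infty_opp _ _ (fun n => arp_opp a b x0 lam _) Heven)
           | apply (cv_infty_opp _ _ (fun n => arp_opp a b x0 lam _) Hodd)]. }
  split; [split; [apply Hlt | exact Hgt]|].
  destruct (Rtotal_order a b) as [H | [H | H]]; [| contradiction |].
  - destruct (Hlt a b x0 H) as [Heven Hodd].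
    exact (cv_infty_even_odd _ (cv_infty_Rabs _ Heven) (cv_minus_infty_Rabs _ Hodd)).
  - destruct (Hgt H) as [Heven Hodd].
    exact (cv_infty_even_odd _ (cv_minus_infty_Rabs _ Heven) (cv_infty_Rabs _ Hodd)).
Qed.
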